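(* Let $d\ge2$ and $\gamma>3/4$. Then $\Lambda_0(\gamma,d)>\frac{(d-1)(\gamma-\frac34)}{2(\gamma-\frac14)\,\mathsf N_0(\gamma)^{\frac{4\gamma}{4\gamma-1}}-2(\gamma-\frac34)}$.
   Context: $\mathsf N_0(\gamma)=2^{1-\frac3{4\gamma}}e^{\frac1{4\gamma}}\frac{(2\gamma-1)^{1-\frac1\gamma}}{(4\gamma-1)^{1-\frac3{4\gamma}}}\Big(\frac{\Gamma(2\gamma-\frac12)}{\Gamma(2\gamma-1)}\Big)^{\frac1{2\gamma}}$; $\beta_0=1-\frac1{4\gamma}$; $\mathsf x_0^*(\gamma)$ is the smallest root $x>\mathsf N_0^{1/\beta_0}$ of $4\gamma x^{\beta_0+1}-(8\gamma-3)\mathsf N_0x+(4\gamma-3)\mathsf N_0=0$ with $\mathsf N_0=\mathsf N_0(\gamma)$; $\Lambda_0(\gamma,d)=\frac{(d-1)(\gamma-3/4)}{\mathsf x_0^*(\gamma)}$. *)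

From Stdlib Require Import Reals.
From Coquelicot Require Import Coquelicot.
Open Scope R_scope.

Definition Gamma (s : R) : R :=
  RInt_gen (fun t => Rpower t (s - 1) * exp (- t)) (at_right 0) (Rbar_locally p_infty).

Definition N0_gamma (g : R) : R :=
  Rpower 2 (1 - 3 / (4 * g)) * exp (1 / (4 * g))
  * Rpower (2 * g - 1) (1 - 1 / g) / Rpower (4 * g - 1) (1 - 3 / (4 * g))
  * Rpower (Gamma (2 * g - 1 / 2) / Gamma (2 * g - 1)) (1 / (2 * g)).

Definition beta0 (g : R) : R := 1 - 1 / (4 * g).

Definition F0 (g x : R) : R :=
  4 * g * Rpower x (beta0 g + 1) - (8 * g - 3) * N0_gamma g * x + (4 * g - 3) * N0_gamma g.

Definition x0_roots (g : R) (x : R) : Prop :=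
  Rpower (N0_gamma g) (1 / beta0 g) < x /\ F0 g x = 0.

Definition x0_star (g : R) : R := real (Glb_Rbar (x0_roots g)).

Definition Lambda0 (g : R) (d : nat) : R := (INR d - 1) * (g - 3 / 4) / x0_star g.

From Stdlib Require Import Reals Lra Psatz.
From Coquelicot Require Import Coquelicot.
Open Scope R_scope.

(* Since Lambda0 = (d - 1)(g - 3/4) / x0*, it suffices to find a root of F0 in (a, D), where
   a = N0^(1/beta0) and D = 2 (g - 1/4) a - 2 (g - 3/4). As a^beta0 = N0, we have
   F0(a) = (4g - 3) N0 (1 - a), negative as soon as N0 > 1, while a Bernoulli-type lower bound on
   (D/a)^beta0 makes F0(D) positive; the intermediate value theorem does the rest.
   N0 > 1 comes from the log-convexity of Gamma: Cauchy-Schwarz gives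
   Gamma(u + 1/2)^2 <= Gamma(u) Gamma(u + 1), which at u = x + 1/2, with Gamma(x + 1) = x Gamma(x),
   bounds Gamma(x + 1/2) / Gamma(x) below by x / sqrt(x + 1/2); for x = 2g - 1 this leaves
   4 g ln N0 >= 1 - 2x ln(1 + 1/(2x)) > 0. *)

Lemma Rpower_pos x y : 0 < Rpower x y.
Proof. apply exp_pos. Qed.

Lemma exp_le_mono x y : x <= y -> exp x <= exp y.
Proof. intros [Hlt | ->]; [left; now apply exp_increasing | right; reflexivity]. Qed.

Lemma Rpower_1_l y : Rpower 1 y = 1.
Proof. unfold Rpower. now rewrite ln_1, Rmult_0_r, exp_0. Qed.

Lemma ln_le_sub_1 x : 0 < x -> ln x <= x - 1.
Proof. intros Hx. pose proof (exp_ineq1_le (ln x)) as H. rewrite exp_ln in H by lra. lra. Qed.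

Lemma ln_lt_sub_1 x : 0 < x -> x <> 1 -> ln x < x - 1.
Proof.
  intros Hx Hx1. pose proof (exp_ineq1 (ln x) (ln_neq_0 x Hx1 Hx)) as H.
  rewrite exp_ln in H by lra. lra.
Qed.

Lemma is_derive_Rpower x c : 0 < x -> is_derive (fun y => Rpower y c) x (c * Rpower x (c - 1)).
Proof. intros Hx. now apply is_derive_Reals, derivable_pt_lim_power. Qed.

Lemma Derive_Rpower x c : 0 < x -> Derive (fun y => Rpower y c) x = c * Rpower x (c - 1).
Proof. intros Hx. now apply is_derive_unique, is_derive_Rpower. Qed.

Lemma Rpower_one_sub_ge y e : 0 < y -> 0 < e -> y * (1 - e * (y - 1)) <= Rpower y (1 - e).
Proof.
  intros Hy He. replace (1 - e) with (1 + - e) by ring.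
  rewrite Rpower_plus, Rpower_1 by lra. apply Rmult_le_compat_l; [lra|].
  unfold Rpower. pose proof (exp_ineq1_le (- e * ln y)). pose proof (ln_le_sub_1 y Hy). nra.
Qed.

Lemma Rpower_at_right_0 s : 0 < s -> filterlim (fun y => Rpower y s) (at_right 0) (locally 0).
Proof.
  intros Hs. apply (filterlim_comp _ _ _ (fun y => s * ln y) exp _ (Rbar_locally m_infty));
    [|exact is_lim_exp_m].
  eapply filterlim_comp; [exact is_lim_ln_0|].
  intros P [M HM]. exists (M / s). intros x Hx. apply HM.
  apply (Rmult_lt_compat_l s) in Hx; [|exact Hs].
  replace (s * (M / s)) with M in Hx by (field; lra). exact Hx.
Qed.

Lemma exp_half_at_p_infty C :
  filterlim (fun t => C * exp (- t / 2)) (Rbar_locally p_infty) (locally 0).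
Proof.
  replace 0 with (C * 0) by ring.
  apply (is_lim_scal_l (fun t => exp (- t / 2)) C p_infty 0).
  apply (filterlim_comp _ _ _ (fun t => - t / 2) exp _ (Rbar_locally m_infty));
    [|exact is_lim_exp_m].
  intros P [M HM]. exists (- 2 * M). intros x Hx. apply HM. lra.
Qed.

Local Notation is_RInt_0_pinfty f l :=
  (@is_RInt_gen R_NormedModule f (at_right 0) (Rbar_locally p_infty) l).

Lemma filter_prod_pos (P : R * R -> Prop) :
  (forall a b, 0 < a -> 0 < b -> P (a, b)) ->
  filter_prod (at_right 0) (Rbar_locally p_infty) P.
Proof.
  intros HP. apply Filter_prod with (fun x => 0 < x) (fun x => 0 < x); auto.
  - exists (mkposreal 1 Rlt_0_1). now intros y _ Hy.
  - now exists 0.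
Qed.

Lemma filter_prod_pos_between (P : R -> Prop) :
  (forall x, 0 < x -> P x) ->
  filter_prod (at_right 0) (Rbar_locally p_infty)
    (fun ab => forall x, Rmin (fst ab) (snd ab) <= x <= Rmax (fst ab) (snd ab) -> P x).
Proof.
  intros HP. apply filter_prod_pos. intros a b Ha Hb x [Hx _]. apply HP.
  assert (0 < Rmin a b) by (apply Rmin_glb_lt; lra). simpl in Hx. lra.
Qed.

Lemma is_RInt_0_pinfty_unique f l1 l2 :
  is_RInt_0_pinfty f l1 -> is_RInt_0_pinfty f l2 -> l1 = l2.
Proof.
  intros H1 H2.
  assert (U := @is_RInt_gen_unique R_CompleteNormedModule _ _
                 (Proper_StrongProper _ (at_right_proper_filter 0))
                 (Proper_StrongProper _ (Rbar_locally_filter p_infty)) f).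
  now rewrite <- (U l1 H1), (U l2 H2).
Qed.

Lemma is_RInt_0_pinfty_derive (F f : R -> R) la lb :
  (forall x, 0 < x -> is_derive F x (f x)) ->
  (forall x, 0 < x -> continuous f x) ->
  filterlim F (at_right 0) (locally la) ->
  filterlim F (Rbar_locally p_infty) (locally lb) ->
  is_RInt_0_pinfty f (lb - la).
Proof.
  intros HF Hf Ha Hb.
  apply (is_RInt_gen_ext (Derive F)).
  { apply filter_prod_pos. intros a b Ha' Hb' x [Hx _]. apply is_derive_unique, HF.
    assert (0 < Rmin a b) by (apply Rmin_glb_lt; lra). simpl in Hx. lra. }
  apply is_RInt_gen_Derive; auto.
  - apply filter_prod_pos_between. intros x Hx. eexists. now apply HF.
  - apply filter_prod_pos_between. intros x Hx.
    apply (continuous_ext_loc _ f); [|now apply Hf].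
    assert (Hx2 : 0 < x / 2) by lra. exists (mkposreal _ Hx2). intros y Hy.
    change (Rabs (y - x) < x / 2) in Hy. apply Rabs_lt_between in Hy.
    symmetry. apply is_derive_unique, HF. lra.
Qed.

Lemma is_RInt_0_pinfty_ge0 h v :
  (forall t, 0 < t -> 0 <= h t) -> is_RInt_0_pinfty h v -> 0 <= v.
Proof.
  intros Hh Hv.
  assert (Hnorm : forall y : R, norm (scal 0 y) = 0).
  { intros y. unfold norm, scal; simpl; unfold abs, mult; simpl. rewrite Rmult_0_l. apply Rabs_R0. }
  rewrite <- (Hnorm v).
  apply (@RInt_gen_norm R_CompleteNormedModule _ _ (at_right_proper_filter 0)
           (Rbar_locally_filter p_infty) (fun t => scal 0 (h t)) h).
  - apply Filter_prod with (fun x => x < 1) (fun x => 1 < x).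
    + exists (mkposreal 1 Rlt_0_1). intros y Hy _.
      change (Rabs (y - 0) < 1) in Hy. apply Rabs_lt_between in Hy. lra.
    + now exists 1.
    + intros a b Ha Hb. simpl. lra.
  - apply filter_prod_pos. intros a b Ha Hb x Hx. rewrite Hnorm. apply Hh. simpl in Hx. lra.
  - apply (is_RInt_gen_scal _ 0 _ Hv).
  - exact Hv.
Qed.

Lemma incr_bounded_lim_p_infty (F : R -> R) M :
  (forall x y, 1 <= x <= y -> F x <= F y) -> (forall x, 1 <= x -> F x <= M) ->
  exists L, filterlim F (Rbar_locally p_infty) (locally L) /\ (forall x, 1 <= x -> F x <= L).
Proof.
  intros Hincr HM.
  destruct (completeness (fun r => exists x, 1 <= x /\ r = F x)) as [L [HLub HLleast]].
  - exists M. intros r [x [Hx ->]]. auto.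
  - now exists (F 1), 1; split; [lra|].
  - assert (HFL : forall x, 1 <= x -> F x <= L) by (intros x Hx; apply HLub; now exists x).
    exists L. split; [|exact HFL].
    apply filterlim_locally. intros eps.
    assert (Hx0 : exists x0, 1 <= x0 /\ L - eps < F x0).
    { apply Classical_Pred_Type.not_all_not_ex. intros Hnot.
      assert (L <= L - eps); [|destruct eps; simpl in *; lra].
      apply HLleast. intros r [x [Hx ->]]. apply Rnot_lt_le. intros Hlt. now apply (Hnot x). }
    destruct Hx0 as [x0 [Hx0 HFx0]]. exists x0. intros x Hx.
    apply Rabs_lt_between'. specialize (Hincr x0 x). specialize (HFL x). lra.
Qed.

Lemma incr_bounded_lim_0 (F : R -> R) m :
  (forall x y, 0 < x <= y -> y <= 1 -> F x <= F y) -> (forall x, 0 < x <= 1 -> m <= F x) ->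
  exists L, filterlim F (at_right 0) (locally L) /\ (forall x, 0 < x <= 1 -> L <= F x).
Proof.
  intros Hincr Hm.
  destruct (incr_bounded_lim_p_infty (fun y => - F (/ y)) (- m)) as [L [HL HFL]].
  - intros x y Hxy. apply Ropp_le_contravar, Hincr.
    + split; [apply Rinv_0_lt_compat; lra|]. apply Rinv_le_contravar; lra.
    + rewrite <- Rinv_1. apply Rinv_le_contravar; lra.
  - intros x Hx. apply Ropp_le_contravar, Hm. split; [apply Rinv_0_lt_compat; lra|].
    rewrite <- Rinv_1. apply Rinv_le_contravar; lra.
  - exists (- L). split.
    + apply (filterlim_ext_loc (fun x => - (- F (/ / x)))).
      { exists (mkposreal 1 Rlt_0_1). intros x _ Hx. rewrite Rinv_inv. ring. }
      apply (filterlim_comp _ _ _ (fun x => - F (/ / x)) Ropp _ (locally L));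
        [|exact (filterlim_opp (K := R_AbsRing) (V := R_NormedModule) L)].
      exact (filterlim_comp _ _ _ _ _ _ _ _ filterlim_Rinv_0_right HL).
    + intros x Hx. specialize (HFL (/ x)). rewrite Rinv_inv in HFL.
      enough (Hinv : 1 <= / x) by (specialize (HFL Hinv); lra).
      rewrite <- Rinv_1. apply Rinv_le_contravar; lra.
Qed.

Lemma RInt_le_antiderivative (f g G : R -> R) a b :
  a <= b -> ex_RInt f a b ->
  (forall t, a <= t <= b -> is_derive G t (g t)) ->
  (forall t, a <= t <= b -> continuous g t) ->
  (forall t, a < t < b -> f t <= g t) ->
  RInt f a b <= G b - G a.
Proof.
  intros Hab Hf HG Hg Hfg.
  assert (HI : is_RInt g a b (minus (G b) (G a))).
  { apply (is_RInt_derive (V := R_CompleteNormedModule)); rewrite Rmin_left, Rmax_right; auto. }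
  replace (G b - G a) with (RInt g a b) by now apply is_RInt_unique.
  apply RInt_le; auto. eexists. exact HI.
Qed.

Definition gamma_integrand (s t : R) : R := Rpower t (s - 1) * exp (- t).

Lemma gamma_integrand_pos s t : 0 < gamma_integrand s t.
Proof. apply Rmult_lt_0_compat; [apply Rpower_pos | apply exp_pos]. Qed.

Lemma gamma_integrand_le_Rpower s t : 0 < t -> gamma_integrand s t <= Rpower t (s - 1).
Proof.
  intros Ht. assert (exp (- t) < 1) by (rewrite <- exp_0; apply exp_increasing; lra).
  pose proof (Rpower_pos t (s - 1)). pose proof (exp_pos (- t)). unfold gamma_integrand. nra.
Qed.

Lemma is_derive_gamma_integrand_succ s t : 0 < t ->
  is_derive (gamma_integrand (s + 1)) t (s * gamma_integrand s t - gamma_integrand (s + 1) t).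
Proof.
  intros Ht. unfold gamma_integrand. replace (s + 1 - 1) with s by ring.
  auto_derive; [eexists; now apply is_derive_Rpower|].
  rewrite Derive_Rpower by exact Ht. ring.
Qed.

Lemma gamma_integrand_continuous s t : 0 < t -> continuous (gamma_integrand s) t.
Proof.
  intros Ht. replace s with (s - 1 + 1) by ring.
  apply (ex_derive_continuous (V := R_NormedModule)). eexists.
  now apply is_derive_gamma_integrand_succ.
Qed.

Lemma ex_RInt_gamma_integrand s a b : 0 < a -> 0 < b -> ex_RInt (gamma_integrand s) a b.
Proof.
  intros Ha Hb. apply (ex_RInt_continuous (V := R_CompleteNormedModule)).
  intros t [Ht _]. apply gamma_integrand_continuous.
  assert (0 < Rmin a b) by (now apply Rmin_glb_lt). lra.
Qed.

(* [C] is chosen so that [(s - 1) ln t <= ln C + t / 2] for [t >= 1], via [ln u <= u - 1]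
   at [u = t / 4k]. *)
Lemma gamma_integrand_le_exp_half s :
  exists C, 0 < C /\ forall t, 1 <= t -> gamma_integrand s t <= C * exp (- t / 2).
Proof.
  set (k := Rabs (s - 1) + 1).
  assert (Hk : 0 < k) by (unfold k; pose proof (Rabs_pos (s - 1)); lra).
  exists (exp (k * ln (4 * k))). split; [apply exp_pos|]. intros t Ht.
  unfold gamma_integrand, Rpower. rewrite <- !exp_plus.
  assert (Hs : s - 1 <= k) by (unfold k; pose proof (Rle_abs (s - 1)); lra).
  assert (Hlnt : 0 <= ln t) by (rewrite <- ln_1; apply ln_le; lra).
  assert (Hlog : k * ln t <= k * ln (4 * k) + t / 4 - k).
  { assert (Ht4k : 0 < t / (4 * k)) by (apply Rdiv_lt_0_compat; lra).
    replace (ln t) with (ln (4 * k) + ln (t / (4 * k)))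
      by (rewrite <- ln_mult by lra; f_equal; field; lra).
    pose proof (ln_le_sub_1 _ Ht4k).
    replace (t / 4) with (k * (t / (4 * k))) by (field; lra). nra. }
  assert ((s - 1) * ln t <= k * ln t) by (apply Rmult_le_compat_r; lra).
  apply exp_le_mono. lra.
Qed.

Definition Gamma_partial (s x : R) : R := RInt (gamma_integrand s) 1 x.

Lemma Gamma_partial_sub s x y : 0 < x -> 0 < y ->
  Gamma_partial s y - Gamma_partial s x = RInt (gamma_integrand s) x y.
Proof.
  intros Hx Hy. unfold Gamma_partial.
  rewrite <- (RInt_Chasles (V := R_CompleteNormedModule) _ 1 x y)
    by (apply ex_RInt_gamma_integrand; lra).
  simpl. unfold plus; simpl. ring.
Qed.

Lemma Gamma_partial_incr s x y : 0 < x <= y -> Gamma_partial s x <= Gamma_partial s y.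
Proof.
  intros Hxy.
  enough (Hint : 0 <= RInt (gamma_integrand s) x y) by (rewrite <- Gamma_partial_sub in Hint; lra).
  apply RInt_ge_0; [lra | apply ex_RInt_gamma_integrand; lra |].
  intros t _. apply Rlt_le, gamma_integrand_pos.
Qed.

Lemma is_derive_Gamma_partial s x : 0 < x -> is_derive (Gamma_partial s) x (gamma_integrand s x).
Proof.
  intros Hx. apply (is_derive_RInt (V := R_NormedModule) _ _ 1);
    [|now apply gamma_integrand_continuous].
  assert (Hx2 : 0 < x / 2) by lra. exists (mkposreal _ Hx2). intros y Hy.
  change (Rabs (y - x) < x / 2) in Hy. apply Rabs_lt_between in Hy.
  apply (RInt_correct (V := R_CompleteNormedModule)), ex_RInt_gamma_integrand; lra.
Qed.

Lemma Gamma_partial_bounded_above s : exists M, forall x, 1 <= x -> Gamma_partial s x <= M.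
Proof.
  destruct (gamma_integrand_le_exp_half s) as [C [HC0 HC]].
  exists (2 * C * exp (- 1 / 2)). intros x Hx.
  assert (Hle := RInt_le_antiderivative (gamma_integrand s) (fun t => C * exp (- t / 2))
                   (fun t => -2 * C * exp (- t / 2)) 1 x Hx).
  pose proof (exp_pos (- x / 2)).
  unfold Gamma_partial.
  enough (RInt (gamma_integrand s) 1 x <= -2 * C * exp (- x / 2) - -2 * C * exp (- 1 / 2)) by nra.
  apply Hle.
  - apply ex_RInt_gamma_integrand; lra.
  - intros t _. auto_derive; auto. unfold Rdiv. field.
  - intros t _. apply (ex_derive_continuous (V := R_NormedModule)). auto_derive; auto.
  - intros t Ht. apply HC. lra.
Qed.

Lemma Gamma_partial_bounded_below s x : 0 < s -> 0 < x <= 1 -> - (1 / s) <= Gamma_partial s x.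
Proof.
  intros Hs Hx.
  assert (Hle := RInt_le_antiderivative (gamma_integrand s) (fun t => Rpower t (s - 1))
                   (fun t => Rpower t s / s) x 1 (proj2 Hx)).
  rewrite <- (Rminus_0_r (Gamma_partial s x)).
  replace 0 with (Gamma_partial s 1) by apply (RInt_point (V := R_CompleteNormedModule)).
  enough (Hint : Gamma_partial s 1 - Gamma_partial s x <= 1 / s - Rpower x s / s).
  { assert (0 < Rpower x s / s) by (apply Rdiv_lt_0_compat; [apply Rpower_pos | lra]). lra. }
  rewrite Gamma_partial_sub by lra.
  replace (1 / s) with (Rpower 1 s / s) by now rewrite Rpower_1_l.
  apply Hle.
  - apply ex_RInt_gamma_integrand; lra.
  - intros t Ht. auto_derive; [eexists; apply is_derive_Rpower; lra|].
    rewrite Derive_Rpower by lra. field. lra.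
  - intros t Ht. apply (ex_derive_continuous (V := R_NormedModule)).
    eexists. apply is_derive_Rpower. lra.
  - intros t Ht. apply gamma_integrand_le_Rpower. lra.
Qed.

Lemma is_RInt_gamma_integrand_ex s : 0 < s ->
  exists l, 0 < l /\ is_RInt_0_pinfty (gamma_integrand s) l.
Proof.
  intros Hs.
  destruct (Gamma_partial_bounded_above s) as [M HM].
  destruct (incr_bounded_lim_p_infty (Gamma_partial s) M) as [Lb [HLb HLb_ge]]; auto.
  { intros x y Hxy. apply Gamma_partial_incr. lra. }
  destruct (incr_bounded_lim_0 (Gamma_partial s) (- (1 / s))) as [La [HLa HLa_le]].
  { intros x y Hxy _. now apply Gamma_partial_incr. }
  { intros x Hx. now apply Gamma_partial_bounded_below. }
  exists (Lb - La). split.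
  - assert (H12 : 0 < RInt (gamma_integrand s) 1 2).
    { apply RInt_gt_0; [lra | intros; apply gamma_integrand_pos |].
      intros t Ht. apply gamma_integrand_continuous. lra. }
    rewrite <- Gamma_partial_sub in H12 by lra.
    specialize (HLb_ge 2 ltac:(lra)). specialize (HLa_le 1 ltac:(lra)). lra.
  - apply (is_RInt_0_pinfty_derive (Gamma_partial s)); auto.
    + apply is_derive_Gamma_partial.
    + apply gamma_integrand_continuous.
Qed.

Lemma is_RInt_Gamma s : 0 < s -> is_RInt_0_pinfty (gamma_integrand s) (Gamma s).
Proof.
  intros Hs. destruct (is_RInt_gamma_integrand_ex s Hs) as [l [_ Hl]].
  change (Gamma s) with (RInt_gen (gamma_integrand s) (at_right 0) (Rbar_locally p_infty)).
  rewrite (@is_RInt_gen_unique R_CompleteNormedModule _ _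
             (Proper_StrongProper _ (at_right_proper_filter 0))
             (Proper_StrongProper _ (Rbar_locally_filter p_infty)) _ l Hl).
  exact Hl.
Qed.

Lemma Gamma_pos s : 0 < s -> 0 < Gamma s.
Proof.
  intros Hs. destruct (is_RInt_gamma_integrand_ex s Hs) as [l [Hl HI]].
  now rewrite (is_RInt_0_pinfty_unique _ _ _ (is_RInt_Gamma s Hs) HI).
Qed.

(* Integrate the derivative of [t ^ s e^(-t)], which vanishes at both ends. *)
Lemma Gamma_succ s : 0 < s -> Gamma (s + 1) = s * Gamma s.
Proof.
  intros Hs.
  assert (Hparts : is_RInt_0_pinfty
            (fun t => s * gamma_integrand s t - gamma_integrand (s + 1) t) (0 - 0)).
  { apply (is_RInt_0_pinfty_derive (gamma_integrand (s + 1))).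
    - intros x Hx. now apply is_derive_gamma_integrand_succ.
    - intros x Hx. apply (ex_derive_continuous (V := R_NormedModule)).
      unfold gamma_integrand. replace (s + 1 - 1) with s by ring.
      auto_derive; repeat split; eexists; apply is_derive_Rpower; lra.
    - apply (filterlim_le_le (F := at_right 0) (fun _ => 0) _ (fun t => Rpower t s) 0).
      + exists (mkposreal 1 Rlt_0_1). intros t _ Ht. split.
        * apply Rlt_le, gamma_integrand_pos.
        * replace s with (s + 1 - 1) at 2 by ring. now apply gamma_integrand_le_Rpower.
      + apply filterlim_const.
      + now apply Rpower_at_right_0.
    - destruct (gamma_integrand_le_exp_half (s + 1)) as [C [_ HC]].
      apply (filterlim_le_le (F := Rbar_locally p_infty) (fun _ => 0) _
               (fun t => C * exp (- t / 2)) 0).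
      + exists 1. intros t Ht. split; [apply Rlt_le, gamma_integrand_pos | apply HC; lra].
      + apply filterlim_const.
      + apply exp_half_at_p_infty. }
  assert (Hlin := is_RInt_gen_minus _ _ _ _ (is_RInt_gen_scal _ s _ (is_RInt_Gamma s Hs))
                    (is_RInt_Gamma (s + 1) ltac:(lra))).
  pose proof (is_RInt_0_pinfty_unique _ _ _ Hparts Hlin) as E.
  unfold minus, plus, opp, scal in E; simpl in E; unfold mult in E; simpl in E. lra.
Qed.

Lemma gamma_integrand_half_sq u t :
  gamma_integrand (u + 1 / 2) t ^ 2 = gamma_integrand u t * gamma_integrand (u + 1) t.
Proof.
  unfold gamma_integrand.
  replace (u + 1 / 2 - 1) with ((u - 1) / 2 + u / 2) by field.
  replace (u + 1 - 1) with (u / 2 + u / 2) by field.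
  replace (u - 1) with ((u - 1) / 2 + (u - 1) / 2) at 2 by field.
  rewrite !Rpower_plus. ring.
Qed.

(* Cauchy-Schwarz for [t ^ ((u - 1) / 2) e^(-t/2)] and [t ^ (u / 2) e^(-t/2)]: the quadratic
   [l ^ 2 Gamma u - 2 l Gamma (u + 1/2) + Gamma (u + 1)] is nonnegative. *)
Lemma Gamma_half_sq_le u : 0 < u -> Gamma (u + 1 / 2) ^ 2 <= Gamma u * Gamma (u + 1).
Proof.
  intros Hu.
  pose proof (Gamma_pos u Hu) as HA.
  assert (Hhalf : 0 < u + 1 / 2) by lra. assert (Hsucc : 0 < u + 1) by lra.
  set (l := Gamma (u + 1 / 2) / Gamma u).
  pose proof (is_RInt_gen_plus _ _ _ _
                (is_RInt_gen_plus _ _ _ _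
                   (is_RInt_gen_scal _ (l ^ 2) _ (is_RInt_Gamma u Hu))
                   (is_RInt_gen_scal _ (-2 * l) _ (is_RInt_Gamma _ Hhalf)))
                (is_RInt_Gamma _ Hsucc)) as Hquad.
  apply is_RInt_0_pinfty_ge0 in Hquad.
  - unfold plus, scal in Hquad; simpl in Hquad; unfold mult in Hquad; simpl in Hquad.
    replace (l * (l * 1) * Gamma u + -2 * l * Gamma (u + 1 / 2) + Gamma (u + 1))
      with (Gamma (u + 1) - Gamma (u + 1 / 2) ^ 2 / Gamma u) in Hquad by (unfold l; field; lra).
    apply (Rmult_le_compat_l (Gamma u)) in Hquad; [|lra].
    replace (Gamma u * (Gamma (u + 1) - Gamma (u + 1 / 2) ^ 2 / Gamma u))
      with (Gamma u * Gamma (u + 1) - Gamma (u + 1 / 2) ^ 2) in Hquad by (field; lra).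
    lra.
  - intros t Ht. unfold plus, scal; simpl; unfold mult; simpl.
    pose proof (gamma_integrand_half_sq u t) as Hsq.
    pose proof (gamma_integrand_pos u t) as Hpos.
    pose proof (pow2_ge_0 (l * gamma_integrand u t - gamma_integrand (u + 1 / 2) t)).
    nra.
Qed.

Lemma Gamma_ratio_lower_bound x : 0 < x ->
  x ^ 2 * Gamma x ^ 2 <= (x + 1 / 2) * Gamma (x + 1 / 2) ^ 2.
Proof.
  intros Hx.
  pose proof (Gamma_half_sq_le (x + 1 / 2) ltac:(lra)) as Hcs.
  replace (x + 1 / 2 + 1 / 2) with (x + 1) in Hcs by field.
  rewrite Gamma_succ, Gamma_succ in Hcs by lra. nra.
Qed.

Lemma ln_Gamma_ratio_ge x : 0 < x ->
  2 * ln x - ln (x + 1 / 2) <= 2 * ln (Gamma (x + 1 / 2) / Gamma x).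
Proof.
  intros Hx.
  pose proof (Gamma_pos x Hx). pose proof (Gamma_pos (x + 1 / 2) ltac:(lra)).
  assert (Hsq : x ^ 2 / (x + 1 / 2) <= (Gamma (x + 1 / 2) / Gamma x) ^ 2).
  { pose proof (Gamma_ratio_lower_bound x Hx).
    apply (Rmult_le_reg_r ((x + 1 / 2) * Gamma x ^ 2)); [apply Rmult_lt_0_compat; nra|].
    replace (x ^ 2 / (x + 1 / 2) * ((x + 1 / 2) * Gamma x ^ 2)) with (x ^ 2 * Gamma x ^ 2)
      by (field; lra).
    replace ((Gamma (x + 1 / 2) / Gamma x) ^ 2 * ((x + 1 / 2) * Gamma x ^ 2))
      with ((x + 1 / 2) * Gamma (x + 1 / 2) ^ 2) by (field; lra).
    assumption. }
  apply ln_le in Hsq; [|apply Rdiv_lt_0_compat; nra].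
  rewrite ln_div, !ln_pow in Hsq by (try apply pow_lt; lra || apply Rdiv_lt_0_compat; lra).
  simpl INR in Hsq. lra.
Qed.

Lemma ln_add_half_sub_ln_lt x : 0 < x -> ln (x + 1 / 2) - ln x < 1 / (2 * x).
Proof.
  intros Hx. rewrite <- ln_div by lra.
  replace (1 / (2 * x)) with ((x + 1 / 2) / x - 1) by (field; lra).
  apply ln_lt_sub_1; [apply Rdiv_lt_0_compat; lra|].
  intros E. apply (Rmult_eq_compat_r x) in E. field_simplify in E; lra.
Qed.

Lemma N0_gamma_eq_exp g : 3 / 4 < g ->
  N0_gamma g
  = exp ((1 + (4 * g - 4) * ln (2 * g - 1) - (4 * g - 3) * ln (2 * g - 1 / 2)
          + 2 * ln (Gamma (2 * g - 1 / 2) / Gamma (2 * g - 1))) / (4 * g)).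
Proof.
  intros Hg.
  unfold N0_gamma. replace (4 * g - 1) with (2 * (2 * g - 1 / 2)) by field.
  unfold Rpower. rewrite ln_mult by lra.
  unfold Rdiv. rewrite <- exp_Ropp, <- !exp_plus. f_equal. field. lra.
Qed.

(* With [x = 2g - 1] the log-convexity bound makes the exponent's numerator at least
   [1 - 2x (ln (x + 1/2) - ln x)], which is positive. *)
Lemma N0_gamma_gt_1 g : 3 / 4 < g -> 1 < N0_gamma g.
Proof.
  intros Hg.
  pose proof (ln_Gamma_ratio_ge (2 * g - 1) ltac:(lra)) as Hratio.
  pose proof (ln_add_half_sub_ln_lt (2 * g - 1) ltac:(lra)) as Hu.
  replace (2 * g - 1 + 1 / 2) with (2 * g - 1 / 2) in Hratio, Hu by field.
  apply (Rmult_lt_compat_l (4 * g - 2)) in Hu; [|lra].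
  replace ((4 * g - 2) * (1 / (2 * (2 * g - 1)))) with 1 in Hu by (field; lra).
  rewrite N0_gamma_eq_exp, <- exp_0 at 1 by exact Hg.
  apply exp_increasing, Rdiv_lt_0_compat; lra.
Qed.

Lemma F0_continuous g x : 0 < x -> continuity_pt (F0 g) x.
Proof.
  intros Hx. apply continuity_pt_filterlim, (ex_derive_continuous (V := R_NormedModule)).
  unfold F0. auto_derive. eexists. now apply is_derive_Rpower.
Qed.

Section F0_sign.

Variables (g a : R).
Hypotheses (Hg : 3 / 4 < g) (Ha : 1 < a) (HaN : Rpower a (beta0 g) = N0_gamma g).

Lemma F0_Rpower_eq x : 0 < x ->
  F0 g x = N0_gamma g * (4 * g * x * Rpower (x / a) (beta0 g) - (8 * g - 3) * x + (4 * g - 3)).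
Proof.
  intros Hx. unfold F0. rewrite Rpower_plus, Rpower_1 by lra.
  replace (Rpower x (beta0 g)) with (Rpower (x / a) (beta0 g) * N0_gamma g); [ring|].
  rewrite <- HaN, Rpower_mult_distr by (try apply Rdiv_lt_0_compat; lra).
  f_equal. field. lra.
Qed.

Lemma F0_neg : F0 g a < 0.
Proof.
  rewrite F0_Rpower_eq by lra. replace (a / a) with 1 by (field; lra).
  rewrite Rpower_1_l.
  assert (HN : 0 < N0_gamma g) by (rewrite <- HaN; apply Rpower_pos).
  replace (4 * g * a * 1 - (8 * g - 3) * a + (4 * g - 3)) with (- ((4 * g - 3) * (a - 1))) by ring.
  assert (0 < (4 * g - 3) * (a - 1)) by (apply Rmult_lt_0_compat; lra). nra.
Qed.

(* With [y = D / a], the bound [y ^ beta0 >= y (1 - (y - 1) / (4 g))] reduces [F0 D / N] to an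
   explicit rational function of [h = g - 3/4] and [a - 1] with positive coefficients. *)
Lemma F0_pos : 0 < F0 g (2 * (g - 1 / 4) * a - 2 * (g - 3 / 4)).
Proof.
  set (D := 2 * (g - 1 / 4) * a - 2 * (g - 3 / 4)).
  assert (HD : a < D) by (unfold D; nra).
  assert (HN : 0 < N0_gamma g) by (rewrite <- HaN; apply Rpower_pos).
  set (y := D / a).
  assert (Hy : 0 < y) by (unfold y; apply Rdiv_lt_0_compat; lra).
  assert (Hlow := Rpower_one_sub_ge y (1 / (4 * g)) Hy ltac:(apply Rdiv_lt_0_compat; lra)).
  set (h := g - 3 / 4). set (s := a - 1).
  assert (Hpoly : 4 * g * D * (y * (1 - 1 / (4 * g) * (y - 1))) - (8 * g - 3) * D + (4 * g - 3)
                  = s ^ 2 * (4 * h ^ 2 + 16 * h ^ 3 + (4 * h ^ 2 + 8 * h ^ 3) * s) / a ^ 2)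
    by (unfold y, D, h, s; field; lra).
  assert (Hquot : 0 < s ^ 2 * (4 * h ^ 2 + 16 * h ^ 3 + (4 * h ^ 2 + 8 * h ^ 3) * s) / a ^ 2).
  { assert (0 < s) by (unfold s; lra). assert (0 < h) by (unfold h; lra).
    apply Rdiv_lt_0_compat; [|apply pow_lt; lra].
    apply Rmult_lt_0_compat; [apply pow_lt; lra|].
    assert (0 < h ^ 2) by (apply pow_lt; lra). assert (0 < h ^ 3) by (apply pow_lt; lra). nra. }
  rewrite F0_Rpower_eq by lra. fold y. unfold beta0.
  apply Rmult_lt_0_compat; [exact HN|].
  assert (0 < 4 * g * D) by (apply Rmult_lt_0_compat; lra). nra.
Qed.

End F0_sign.

Lemma Glb_Rbar_between (E : R -> Prop) a r :
  (forall x, E x -> a <= x) -> E r -> a <= real (Glb_Rbar E) <= r.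
Proof.
  intros Hlow Hr. destruct (Glb_Rbar_correct E) as [Hlb Hglb].
  assert (Hle_r := Hlb r Hr).
  assert (Hge_a : Rbar_le a (Glb_Rbar E)) by (apply Hglb; intros x Hx; apply Hlow, Hx).
  destruct (Glb_Rbar E); simpl in *; tauto.
Qed.

Lemma x0_star_bounds g : 3 / 4 < g ->
  0 < x0_star g
  < 2 * (g - 1 / 4) * Rpower (N0_gamma g) (4 * g / (4 * g - 1)) - 2 * (g - 3 / 4).
Proof.
  intros Hg.
  assert (Hb : 0 < beta0 g).
  { unfold beta0. enough (1 / (4 * g) < 1) by lra.
    apply (Rmult_lt_reg_r (4 * g)); [lra|]. field_simplify; lra. }
  set (a := Rpower (N0_gamma g) (1 / beta0 g)).
  replace (4 * g / (4 * g - 1)) with (1 / beta0 g) by (unfold beta0; field; lra). fold a.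
  assert (Ha : 1 < a).
  { rewrite <- (Rpower_O (N0_gamma g)) by (pose proof (N0_gamma_gt_1 g Hg); lra).
    apply Rpower_lt; [now apply N0_gamma_gt_1 | apply Rdiv_lt_0_compat; lra]. }
  assert (HaN : Rpower a (beta0 g) = N0_gamma g).
  { unfold a. rewrite Rpower_mult. replace (1 / beta0 g * beta0 g) with 1 by (field; lra).
    apply Rpower_1. pose proof (N0_gamma_gt_1 g Hg). lra. }
  set (D := 2 * (g - 1 / 4) * a - 2 * (g - 3 / 4)).
  assert (HaD : a < D) by (unfold D; nra).
  pose proof (F0_neg g a Hg Ha HaN) as HFa.
  pose proof (F0_pos g a Hg Ha HaN) as HFD. fold D in HFD.
  destruct (Ranalysis5.IVT_interv (F0 g) a D) as [r [Hr HFr]]; auto.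
  - intros x Hx. apply F0_continuous. lra.
  - assert (Har : a < r < D).
    { split; apply Rnot_le_lt; intros Hle.
      - replace r with a in HFr by lra. lra.
      - replace r with D in HFr by lra. lra. }
    assert (Hbetween : a <= x0_star g <= r).
    { apply Glb_Rbar_between; [intros x [Hx _]; fold a in Hx; lra | split; [fold a|]; lra]. }
    lra.
Qed.

Theorem proposition3 (d : nat) (g : R) (Hd : (2 <= d)%nat) (Hg : 3 / 4 < g) :
  Lambda0 g d >
  (INR d - 1) * (g - 3 / 4) /
  (2 * (g - 1 / 4) * Rpower (N0_gamma g) (4 * g / (4 * g - 1)) - 2 * (g - 3 / 4)).
Proof.
  destruct (x0_star_bounds g Hg) as [Hx0 HxD].
  assert (Hd2 : 2 <= INR d) by (apply (le_INR 2); exact Hd).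
  unfold Lambda0, Rdiv. apply Rmult_lt_compat_l; [apply Rmult_lt_0_compat; lra|].
  apply Rinv_lt_contravar; [apply Rmult_lt_0_compat|]; lra.
Qed.
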